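(* Assume condition (ii): $k(0)=\alpha\in(2,\infty)$. Then there exist $c>0$ and $h_0>0$ such that $\inf_{|u|\le h^{-1}}|\varphi(u)|\ge c\,h^{\alpha}$ for all $h\in(0,h_0]$.
   Context: $\nu$ is a finite Borel measure on $(0,\infty)$ with $\int_{(2,\infty)}\log x\,\nu(dx)<\infty$ (the Lévy measure of a compound Poisson subordinator), $k(x)=\nu((x,\infty))$ for $x\ge0$, and $\varphi(t)=\exp\big(\int_0^\infty(e^{itx}-1)\frac{k(x)}{x}dx\big)$ is the characteristic function of the stationary distribution of the OU process $dX_t=-\lambda X_tdt+dJ_{\lambda t}$ driven by the compound Poisson process $J$ with Lévy measure $\nu$. *)

From Stdlib Require Import Reals.
Open Scope R_scope.

Definition improper_int_from (a : R) (f : R -> R) (l : R) : Prop :=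
  (forall A, a <= A -> inhabited (Riemann_integrable f a A)) /\
  (forall eps, 0 < eps -> exists M, forall A (pr : Riemann_integrable f a A),
      M <= A -> Rabs (RiemannInt pr - l) < eps).

(* Complex numbers represented as pairs (re, im); modulus. *)
Definition cmod (z : R * R) : R := sqrt (fst z ^ 2 + snd z ^ 2).

Definition cexp (a b : R) : R * R := (exp a * cos b, exp a * sin b).

(* is_phi k t z :  z = φ(t) = exp( ∫_0^∞ (e^{itx}-1) k(x)/x dx ), where the
   complex integral is split into its real part  ∫ (cos(tx)-1) k(x)/x dx
   and imaginary part  ∫ sin(tx) k(x)/x dx. *)
Definition is_phi (k : R -> R) (t : R) (z : R * R) : Prop :=
  exists I1 I2,
    improper_int_from 0 (fun x => (cos (t * x) - 1) * k x / x) I1 /\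
    improper_int_from 0 (fun x => sin (t * x) * k x / x) I2 /\
    z = cexp I1 I2.

(* k is the tail function x |-> ν((x,∞)) of a finite Borel measure ν on (0,∞):
   nonnegative, nonincreasing, right-continuous on [0,∞), vanishing at ∞.
   (Every such function arises from a unique such ν.) *)
Definition tail_function (k : R -> R) : Prop :=
  (forall x, 0 <= x -> 0 <= k x) /\
  (forall x y, 0 <= x -> x <= y -> k y <= k x) /\
  (forall x, 0 <= x -> forall eps, 0 < eps ->
      exists d, 0 < d /\ forall y, x <= y < x + d -> Rabs (k y - k x) < eps) /\
  (forall eps, 0 < eps -> exists M, forall x, M <= x -> k x < eps).

(* Log-moment condition ∫_{(2,∞)} log x ν(dx) < ∞, expressed through k:
   by Fubini  ∫_{(2,∞)} log x ν(dx) = log 2 · k(2) + ∫_2^∞ k(x)/x dx,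
   so it is equivalent to convergence of ∫_2^∞ k(x)/x dx. *)
Definition log_moment_finite (k : R -> R) : Prop :=
  exists L, improper_int_from 2 (fun x => k x / x) L.

From Stdlib Require Import Reals Lra Lia ClassicalEpsilon FunctionalExtensionality.
From Coquelicot Require Import Coquelicot.
Open Scope R_scope.

(* Since |φ(u)| = exp (∫_0^∞ (cos (u x) - 1) k(x)/x dx) and the integrand is even
   in u, it suffices to bound this integral below by -C - α ln (max 1 U), U = |u|.
   Split it at 1/U and 2.  On [0, 1/U] the integrand is >= -U α, because
   |cos t - 1| <= |t| and 0 <= k <= k(0) = α.  On [1/U, 2] it is
   >= α (cos (U x) - 1)/x, whose integral is >= -α (2 + ln 2 + ln U) after one
   integration by parts.  On [2, ∞) it is >= -2 k(x)/x, integrable by the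
   log-moment condition.  For |u| <= 1/h and h <= 1 this gives |φ(u)| >= e^{-C} h^α;
   only α >= 0 is used, not α > 2.
   The integrals exist as Riemann integrals because a nonincreasing k is a
   uniform limit of step functions whose level sets are intervals. *)

Lemma Rabs_sin_le x : Rabs (sin x) <= Rabs x.
Proof.
  destruct (MVT_abs sin cos 0 x) as [c [Hc _]].
  { intros; apply derivable_pt_lim_sin. }
  rewrite sin_0, !Rminus_0_r in Hc; rewrite Hc.
  assert (Rabs (cos c) <= 1) by (apply Rabs_le; pose proof (COS_bound c); lra).
  pose proof (Rabs_pos x); nra.
Qed.

Lemma Rabs_cos_sub1_le x : Rabs (cos x - 1) <= Rabs x.
Proof.
  destruct (MVT_abs cos (fun t => - sin t) 0 x) as [c [Hc _]].
  { intros; apply derivable_pt_lim_cos. }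
  rewrite cos_0, Rminus_0_r in Hc; rewrite Hc.
  assert (Rabs (- sin c) <= 1).
  { rewrite Rabs_Ropp; apply Rabs_le; pose proof (SIN_bound c); lra. }
  pose proof (Rabs_pos x); nra.
Qed.

(** * Riemann integrability of [G * k] for nonincreasing [k] *)

Lemma ex_RInt_uniform_approx (f : R -> R) (a b : R) :
  (forall eps, 0 < eps -> exists g, ex_RInt g a b /\
     forall x, Rmin a b <= x <= Rmax a b -> Rabs (f x - g x) <= eps) ->
  ex_RInt f a b.
Proof.
  intros Happrox.
  assert (Hg : forall n : nat, {g : R -> R | ex_RInt g a b /\
     forall x, Rmin a b <= x <= Rmax a b -> Rabs (f x - g x) <= / INR (S n)}).
  { intro n; apply constructive_indefinite_description, Happrox.
    apply Rinv_0_lt_compat, lt_0_INR; lia. }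
  (* outside the interval the approximants are set equal to [f], so that they
     converge uniformly on all of [R] *)
  set (G n x := if Rle_dec (Rmin a b) x then if Rle_dec x (Rmax a b)
                then proj1_sig (Hg n) x else f x else f x).
  destruct (filterlim_RInt G a b Hierarchy.eventually _ f (fun n => RInt (G n) a b))
    as [If [_ HI]]; [| |now exists If].
  - intro n; apply RInt_correct.
    unfold G; destruct (Hg n) as [g Hg_n]; simpl; destruct Hg_n as [Hint _].
    apply ex_RInt_ext with g; [|exact Hint].
    intros x Hx.
    destruct (Rle_dec (Rmin a b) x); [|lra].
    destruct (Rle_dec x (Rmax a b)); [reflexivity|lra].
  - apply filterlim_locally; intros eps.
    destruct (archimed_cor1 eps (cond_pos eps)) as [N [HN HN0]].
    exists N; intros n Hn t.
    change (Rabs (G n t - f t) < eps); unfold G.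
    destruct (Hg n) as [g Hg_n]; simpl; destruct Hg_n as [_ Hclose].
    destruct (Rle_dec (Rmin a b) t); [destruct (Rle_dec t (Rmax a b))|].
    + rewrite Rabs_minus_sym; eapply Rle_lt_trans; [apply Hclose; lra|].
      eapply Rle_lt_trans; [|exact HN].
      apply Rinv_le_contravar; [apply lt_0_INR; lia|apply le_INR; lia].
    + rewrite Rminus_eq_0, Rabs_R0; apply cond_pos.
    + rewrite Rminus_eq_0, Rabs_R0; apply cond_pos.
Qed.

Lemma ex_RInt_restrict_lower_set (P : R -> Prop) (G : R -> R) a b :
  a <= b -> (forall x y, a <= x -> x <= y -> y <= b -> P y -> P x) ->
  (forall t, a <= t <= b -> ex_RInt G a t) ->
  ex_RInt (fun x => if excluded_middle_informative (P x) then G x else 0) a b.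
Proof.
  intros Hab HP HG.
  set (E x := x = a \/ (a <= x <= b /\ P x)).
  destruct (completeness E) as [t [Hub Hlub]].
  { exists b; intros x [->|[Hx _]]; lra. }
  { exists a; left; reflexivity. }
  assert (Hat : a <= t) by (apply Hub; left; reflexivity).
  assert (Htb : t <= b) by (apply Hlub; intros x [->|[Hx _]]; lra).
  apply ex_RInt_Chasles with t.
  - apply ex_RInt_ext with G; [|apply HG; lra].
    intros x Hx; rewrite Rmin_left, Rmax_right in Hx by lra.
    destruct (excluded_middle_informative (P x)) as [|HnP]; [reflexivity|].
    enough (t <= x) by lra.
    apply Hlub; intros y [->|[Hy Py]]; [lra|].
    destruct (Rle_dec y x) as [|Hxy]; [lra|].
    exfalso; apply HnP, HP with y; lra || exact Py.
  - apply ex_RInt_ext with (fun _ => 0); [|apply ex_RInt_const].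
    intros x Hx; rewrite Rmin_left, Rmax_right in Hx by lra.
    destruct (excluded_middle_informative (P x)) as [Px|]; [|reflexivity].
    enough (x <= t) by lra.
    apply Hub; right; split; [lra|exact Px].
Qed.

Fixpoint staircase (e v : R) (n : nat) : R :=
  match n with
  | O => 0
  | S m => staircase e v m + (if Rle_dec (INR (S m) * e) v then e else 0)
  end.

Lemma staircase_approx e v n : 0 < e -> 0 <= v < INR n * e ->
  v - e < staircase e v n <= v.
Proof.
  intros He [Hv Hvn].
  enough (Hinv : (INR n * e <= v -> staircase e v n = INR n * e) /\
                 (v < INR n * e -> v - e < staircase e v n <= v)) by tauto.
  clear Hvn; induction n as [|n [IHle IHlt]]; cbn [staircase].
  - simpl; split; intros; lra.
  - rewrite S_INR in *; split; intros Hn.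
    + destruct (Rle_dec _ v); [|lra].
      rewrite IHle by nra; ring.
    + destruct (Rle_dec _ v); [lra|].
      rewrite Rplus_0_r.
      destruct (Rle_dec (INR n * e) v).
      * rewrite IHle by lra; nra.
      * apply IHlt; lra.
Qed.

Lemma ex_RInt_mul_nonincreasing (G k : R -> R) a b M :
  a <= b -> (forall x, a <= x <= b -> 0 <= k x) ->
  (forall x y, a <= x -> x <= y -> y <= b -> k y <= k x) ->
  (forall t, a <= t <= b -> ex_RInt G a t) ->
  (forall x, a <= x <= b -> Rabs (G x) <= M) ->
  ex_RInt (fun x => G x * k x) a b.
Proof.
  intros Hab Hk0 Hkmon HG HM.
  apply ex_RInt_uniform_approx; intros eps Heps.
  set (e := eps / (Rabs M + 1)).
  assert (He : 0 < e) by (apply Rdiv_lt_0_compat; pose proof (Rabs_pos M); lra).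
  destruct (INR_archimed e (k a) (Rlt_gt _ _ He)) as [N HN].
  exists (fun x => G x * staircase e (k x) N); split.
  - clear HN; induction N as [|n IH].
    { apply ex_RInt_ext with (fun _ => 0); [|apply ex_RInt_const].
      intros; simpl; ring. }
    (* each new step adds [e * G] on the lower set [{x | S n * e <= k x}] *)
    apply ex_RInt_ext with (fun x => plus (G x * staircase e (k x) n)
      (if excluded_middle_informative (INR (S n) * e <= k x) then e * G x else 0)).
    + intros x _; cbn [staircase]; unfold plus; simpl.
      destruct (excluded_middle_informative _), (Rle_dec _ _); try lra; ring.
    + apply (@ex_RInt_plus R_NormedModule); [exact IH|].
      apply ex_RInt_restrict_lower_set; [exact Hab| |].
      * intros x y Hx Hxy Hy Hky; eapply Rle_trans; [exact Hky|apply Hkmon; lra].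
      * intros t Ht; apply (ex_RInt_scal G a t e), HG, Ht.
  - intros x Hx; rewrite Rmin_left, Rmax_right in Hx by lra.
    assert (Hkx : 0 <= k x < INR N * e).
    { split; [now apply Hk0|]. enough (k x <= k a) by lra. apply Hkmon; lra. }
    pose proof (staircase_approx e (k x) N He Hkx) as Hstair.
    assert (HMe : Rabs M * e <= eps).
    { unfold e; pose proof (Rabs_pos M).
      apply Rmult_le_reg_r with (Rabs M + 1); [lra|].
      unfold Rdiv; rewrite Rmult_assoc, (Rmult_assoc eps), Rinv_l by lra; nra. }
    rewrite <- Rmult_minus_distr_l, Rabs_mult.
    assert (Rabs (k x - staircase e (k x) N) <= e) by (apply Rabs_le; lra).
    pose proof (HM x Hx); pose proof (Rabs_pos (G x)); pose proof (Rle_abs M).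
    pose proof (Rabs_pos (k x - staircase e (k x) N)); nra.
Qed.

Lemma improper_int_from_RInt (f : R -> R) a l : improper_int_from a f l ->
  (forall A, a <= A -> ex_RInt f a A) /\
  (forall eps, 0 < eps -> exists M, forall A, M <= A -> a <= A -> Rabs (RInt f a A - l) < eps).
Proof.
  intros [Hint Hlim]; split.
  - intros A HA; destruct (Hint A HA) as [pr]; now apply ex_RInt_Reals_1.
  - intros eps Heps; destruct (Hlim eps Heps) as [M HM]; exists M.
    intros A HMA HaA; destruct (Hint A HaA) as [pr].
    rewrite (RInt_Reals f a A pr); now apply HM.
Qed.

Lemma improper_int_from_intro (f : R -> R) a l :
  (forall A, a <= A -> ex_RInt f a A) ->
  (forall eps, 0 < eps -> exists M, forall A, M <= A -> Rabs (RInt f a A - l) < eps) ->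
  improper_int_from a f l.
Proof.
  intros Hint Hlim; split.
  - intros A HA; constructor; now apply ex_RInt_Reals_0, Hint.
  - intros eps Heps; destruct (Hlim eps Heps) as [M HM]; exists M.
    intros A pr HMA; rewrite <- (RInt_Reals f a A pr); now apply HM.
Qed.

Lemma improper_int_from_ge (f : R -> R) a l B :
  improper_int_from a f l ->
  (exists M, forall A, M <= A -> B <= RInt f a A) -> B <= l.
Proof.
  intros Hf [M' HM'].
  destruct (improper_int_from_RInt f a l Hf) as [_ Hlim].
  destruct (Rle_dec B l) as [|Hlt]; [assumption|].
  destruct (Hlim (B - l) ltac:(lra)) as [M HM].
  set (A := Rmax (Rmax M M') a).
  assert (HMA : M <= A /\ M' <= A /\ a <= A).
  { unfold A; pose proof (Rmax_l (Rmax M M') a); pose proof (Rmax_r (Rmax M M') a).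
    pose proof (Rmax_l M M'); pose proof (Rmax_r M M'); lra. }
  specialize (HM A ltac:(lra) ltac:(lra)); specialize (HM' A ltac:(lra)).
  apply Rabs_def2 in HM; lra.
Qed.

Lemma Rabs_RInt_le_dominated (f g : R -> R) C u v : u <= v ->
  ex_RInt f u v -> ex_RInt g u v ->
  (forall x, u <= x <= v -> Rabs (f x) <= C * g x) ->
  Rabs (RInt f u v) <= C * RInt g u v.
Proof.
  intros Huv Hf Hg Hfg.
  assert (HCg : ex_RInt (fun x => C * g x) u v) by exact (ex_RInt_scal g u v C Hg).
  replace (C * RInt g u v) with (RInt (fun x => C * g x) u v)
    by exact (RInt_scal g u v C Hg).
  apply Rabs_le; split.
  - replace (- RInt (fun x => C * g x) u v) with (RInt (fun x => - (C * g x)) u v)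
      by exact (RInt_opp (fun x => C * g x) u v HCg).
    apply RInt_le; auto.
    + exact (ex_RInt_opp _ u v HCg).
    + intros x Hx; specialize (Hfg x ltac:(lra)); apply Rabs_le_between in Hfg.
      change (- (C * g x) <= f x); lra.
  - apply RInt_le; auto.
    intros x Hx; specialize (Hfg x ltac:(lra)); apply Rabs_le_between in Hfg; lra.
Qed.

Lemma RInt_sub_from (f : R -> R) a u v : a <= u -> u <= v -> ex_RInt f a v ->
  RInt f a v - RInt f a u = RInt f u v.
Proof.
  intros Hau Huv Hf.
  rewrite <- (RInt_Chasles f a u v);
    [| apply (@ex_RInt_Chasles_1 R_CompleteNormedModule) with v
     | apply (@ex_RInt_Chasles_2 R_CompleteNormedModule) with a]; auto.
  unfold plus; simpl; ring.
Qed.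

Lemma improper_int_from_dominated (f g : R -> R) a b C L :
  a <= b -> 0 <= C ->
  (forall A, a <= A -> ex_RInt f a A) ->
  (forall x, b <= x -> Rabs (f x) <= C * g x) ->
  improper_int_from b g L ->
  exists I, improper_int_from a f I.
Proof.
  intros Hab HC Hf Hfg Hg.
  destruct (improper_int_from_RInt g b L Hg) as [Hgint Hglim].
  assert (Hcauchy : forall eps, 0 < eps -> exists M, b <= M /\
            forall u v, M <= u -> u <= v -> Rabs (RInt f a v - RInt f a u) < eps).
  { intros eps Heps.
    set (eps' := eps / (2 * (C + 1))).
    assert (Heps' : 0 < eps') by (apply Rdiv_lt_0_compat; lra).
    destruct (Hglim eps' Heps') as [M HM].
    exists (Rmax M b); split; [apply Rmax_r|].
    intros u v Hu Huv; pose proof (Rmax_l M b); pose proof (Rmax_r M b).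
    rewrite (RInt_sub_from f a u v) by (lra || apply Hf; lra).
    assert (Hgv : ex_RInt g b v) by (apply Hgint; lra).
    assert (Hgu : RInt g u v = RInt g b v - RInt g b u)
      by (symmetry; apply RInt_sub_from; lra || exact Hgv).
    assert (Hdom : Rabs (RInt f u v) <= C * RInt g u v).
    { apply Rabs_RInt_le_dominated; [lra| | |intros x Hx; apply Hfg; lra].
      - apply (@ex_RInt_Chasles_2 R_CompleteNormedModule) with a; [lra|apply Hf; lra].
      - apply (@ex_RInt_Chasles_2 R_CompleteNormedModule) with b; [lra|exact Hgv]. }
    assert (Hgsmall : RInt g u v < 2 * eps').
    { pose proof (Rabs_def2 _ _ (HM u ltac:(lra) ltac:(lra))).
      pose proof (Rabs_def2 _ _ (HM v ltac:(lra) ltac:(lra))).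
      rewrite Hgu; lra. }
    assert (HCeps : C * (2 * eps') < eps).
    { unfold eps'; apply Rmult_lt_reg_r with (C + 1); [lra|].
      replace (C * (2 * (eps / (2 * (C + 1)))) * (C + 1)) with (C * eps) by (field; lra).
      nra. }
    pose proof (Rabs_pos (RInt f u v)); nra. }
  destruct (proj1 (filterlim_locally_cauchy (F := Rbar_locally p_infty)
                     (fun A => RInt f a A))) as [I HI].
  { intros eps; destruct (Hcauchy eps (cond_pos eps)) as [M [HbM HM]].
    exists (fun A => M <= A); split; [exists M; intros; lra|].
    intros u v Hu Hv; change (Rabs (RInt f a v - RInt f a u) < eps).
    destruct (Rle_dec u v).
    - now apply HM.
    - rewrite Rabs_minus_sym; apply HM; lra. }
  exists I; apply improper_int_from_intro; [exact Hf|].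
  intros eps Heps.
  destruct (proj1 (filterlim_locally _ I) HI (mkposreal eps Heps)) as [M HM].
  exists (M + 1); intros A HA; exact (HM A ltac:(lra)).
Qed.

(* [F x / x], extended at [0] by its limit [l = F'(0)] *)
Definition extended_quotient (F : R -> R) (l x : R) : R :=
  if Req_EM_T x 0 then l else F x / x.

Lemma continuous_extended_quotient (F : R -> R) l x :
  (forall y, continuous F y) -> derivable_pt_lim F 0 l -> F 0 = 0 ->
  continuous (extended_quotient F l) x.
Proof.
  intros HF HF'0 HF0.
  destruct (Req_EM_T x 0) as [->|Hx].
  - apply continuity_pt_filterlim; intros eps Heps.
    destruct (HF'0 eps Heps) as [d Hd].
    exists d; split; [apply cond_pos|].
    intros y [[_ Hy0] Hyd]; unfold extended_quotient.
    destruct (Req_EM_T y 0) as [|_]; [congruence|].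
    destruct (Req_EM_T 0 0) as [_|]; [|congruence].
    simpl in Hyd; unfold R_dist in *; rewrite Rminus_0_r in Hyd.
    specialize (Hd y (not_eq_sym Hy0) Hyd).
    rewrite Rplus_0_l, HF0, Rminus_0_r in Hd; exact Hd.
  - apply continuous_ext_loc with (fun y => F y / y).
    + exists (mkposreal (Rabs x) (Rabs_pos_lt x Hx)); intros y Hy.
      change (Rabs (y - x) < Rabs x) in Hy.
      unfold extended_quotient; destruct (Req_EM_T y 0) as [->|]; [|reflexivity].
      rewrite Rminus_0_l, Rabs_Ropp in Hy; lra.
    + apply continuity_pt_filterlim, continuity_pt_div;
        [apply continuity_pt_filterlim, HF|apply continuity_pt_id|exact Hx].
Qed.

Lemma Rabs_extended_quotient_le (F : R -> R) l M x :
  (forall y, Rabs (F y) <= M * Rabs y) -> Rabs l <= M ->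
  Rabs (extended_quotient F l x) <= M.
Proof.
  intros HF Hl; unfold extended_quotient.
  destruct (Req_EM_T x 0) as [_|Hx]; [exact Hl|].
  unfold Rdiv; rewrite Rabs_mult, Rabs_inv.
  apply Rmult_le_reg_r with (Rabs x); [now apply Rabs_pos_lt|].
  rewrite Rmult_assoc, Rinv_l by now apply Rabs_no_R0.
  rewrite Rmult_1_r; apply HF.
Qed.

Lemma ex_RInt_quotient_mul_nonincreasing (F k : R -> R) l M a b :
  (forall y, continuous F y) -> derivable_pt_lim F 0 l -> F 0 = 0 ->
  (forall y, Rabs (F y) <= M * Rabs y) -> Rabs l <= M ->
  (forall x, 0 <= x -> 0 <= k x) ->
  (forall x y, 0 <= x -> x <= y -> k y <= k x) ->
  0 <= a -> a <= b -> ex_RInt (fun x => F x * k x / x) a b.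
Proof.
  intros HF HF'0 HF0 HFM HlM Hk0 Hkmon Ha Hab.
  apply ex_RInt_ext with (fun x => extended_quotient F l x * k x).
  - intros x Hx; rewrite Rmin_left in Hx by lra.
    unfold extended_quotient; destruct (Req_EM_T x 0); [lra|].
    change (F x / x * k x = F x * k x / x); unfold Rdiv; ring.
  - apply ex_RInt_mul_nonincreasing with M; try easy.
    + intros x Hx; apply Hk0; lra.
    + intros x y Hx Hxy _; apply Hkmon; lra.
    + intros t Ht; apply (@ex_RInt_continuous R_CompleteNormedModule); intros.
      now apply continuous_extended_quotient.
    + intros x _; now apply Rabs_extended_quotient_le.
Qed.

Definition cos_integrand (k : R -> R) (u x : R) : R := (cos (u * x) - 1) * k x / x.
Definition sin_integrand (k : R -> R) (u x : R) : R := sin (u * x) * k x / x.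

Section Integrands.
Variable k : R -> R.
Hypothesis k_ge0 : forall x, 0 <= x -> 0 <= k x.
Hypothesis k_nonincreasing : forall x y, 0 <= x -> x <= y -> k y <= k x.

Lemma ex_RInt_cos_integrand u a b : 0 <= a -> a <= b -> ex_RInt (cos_integrand k u) a b.
Proof.
  apply ex_RInt_quotient_mul_nonincreasing with (l := 0) (M := Rabs u); auto.
  - intros y; apply (@ex_derive_continuous R_AbsRing R_NormedModule); auto_derive; auto.
  - apply is_derive_Reals; auto_derive; auto.
    rewrite Rmult_0_r, sin_0; ring.
  - rewrite Rmult_0_r, cos_0; ring.
  - intros y; rewrite <- Rabs_mult; apply Rabs_cos_sub1_le.
  - rewrite Rabs_R0; apply Rabs_pos.
Qed.

Lemma ex_RInt_sin_integrand u a b : 0 <= a -> a <= b -> ex_RInt (sin_integrand k u) a b.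
Proof.
  apply ex_RInt_quotient_mul_nonincreasing with (l := u) (M := Rabs u); auto.
  - intros y; apply (@ex_derive_continuous R_AbsRing R_NormedModule); auto_derive; auto.
  - apply is_derive_Reals; auto_derive; auto.
    rewrite Rmult_0_r, cos_0; ring.
  - rewrite Rmult_0_r, sin_0; ring.
  - intros y; rewrite <- Rabs_mult; apply Rabs_sin_le.
  - apply Rle_refl.
Qed.

Variable L : R.
Hypothesis k_log_moment : improper_int_from 2 (fun x => k x / x) L.

Lemma ex_improper_cos_integrand u : exists I, improper_int_from 0 (cos_integrand k u) I.
Proof.
  apply improper_int_from_dominated with (fun x => k x / x) 2 2 L; try lra; auto.
  - intros A HA; apply ex_RInt_cos_integrand; auto; lra.
  - intros x Hx; unfold cos_integrand, Rdiv.
    pose proof (k_ge0 x ltac:(lra)); pose proof (COS_bound (u * x)).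
    assert (0 < / x) by (apply Rinv_0_lt_compat; lra).
    rewrite Rabs_mult, Rabs_mult, (Rabs_pos_eq (k x)), (Rabs_pos_eq (/ x)) by lra.
    rewrite Rmult_assoc; apply Rmult_le_compat_r; [nra|apply Rabs_le; lra].
Qed.

Lemma ex_improper_sin_integrand u : exists I, improper_int_from 0 (sin_integrand k u) I.
Proof.
  apply improper_int_from_dominated with (fun x => k x / x) 2 1 L; try lra; auto.
  - intros A HA; apply ex_RInt_sin_integrand; auto; lra.
  - intros x Hx; unfold sin_integrand, Rdiv.
    pose proof (k_ge0 x ltac:(lra)); pose proof (SIN_bound (u * x)).
    assert (0 < / x) by (apply Rinv_0_lt_compat; lra).
    rewrite Rabs_mult, Rabs_mult, (Rabs_pos_eq (k x)), (Rabs_pos_eq (/ x)) by lra.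
    rewrite Rmult_assoc; apply Rmult_le_compat_r; [nra|apply Rabs_le; lra].
Qed.

End Integrands.

(** * Lower bound for the real part of [log φ] *)

Lemma Rinv_gt1 U : 1 < U -> 0 < / U < 1.
Proof.
  intros HU; split; [apply Rinv_0_lt_compat; lra|].
  rewrite <- Rinv_1; apply Rinv_lt_contravar; lra.
Qed.

(* An antiderivative of a minorant of [(cos (U x) - 1) / x]: integrate
   [cos (U x) / x] by parts and bound [sin] below by [-1]. *)
Definition cos_minorant_primitive (U x : R) : R := sin (U * x) / (U * x) + / (U * x) - ln x.
Definition cos_minorant (U x : R) : R :=
  cos (U * x) / x - sin (U * x) / (U * x ^ 2) - / x - / (U * x ^ 2).

Lemma cos_minorant_le U x : 0 < U -> 0 < x -> cos_minorant U x <= (cos (U * x) - 1) / x.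
Proof.
  intros HU Hx.
  assert (Hgap : (cos (U * x) - 1) / x - cos_minorant U x = (sin (U * x) + 1) / (U * x ^ 2))
    by (unfold cos_minorant; field; lra).
  assert (0 <= (sin (U * x) + 1) / (U * x ^ 2)).
  { apply Rdiv_le_0_compat; [pose proof (SIN_bound (U * x)); lra|].
    apply Rmult_lt_0_compat; [lra|apply pow_lt; lra]. }
  lra.
Qed.

Lemma RInt_cos_minorant U a b : 0 < U -> 0 < a -> a <= b ->
  RInt (cos_minorant U) a b = cos_minorant_primitive U b - cos_minorant_primitive U a.
Proof.
  intros HU Ha Hab.
  apply is_RInt_unique, (@is_RInt_derive R_CompleteNormedModule);
    intros x Hx; rewrite Rmin_left in Hx by lra.
  - unfold cos_minorant_primitive, cos_minorant; auto_derive.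
    + repeat split; try apply Rgt_not_eq, Rmult_lt_0_compat; lra.
    + field; lra.
  - apply (@ex_derive_continuous R_AbsRing R_NormedModule); unfold cos_minorant; auto_derive.
    repeat split; apply Rgt_not_eq; repeat apply Rmult_lt_0_compat; lra.
Qed.

Lemma RInt_cos_minorant_ge U : 1 < U -> - (2 + ln 2 + ln U) <= RInt (cos_minorant U) (/ U) 2.
Proof.
  intros HU.
  pose proof (Rinv_gt1 U HU) as HUinv.
  rewrite RInt_cos_minorant by lra.
  unfold cos_minorant_primitive; rewrite Rinv_r, ln_Rinv by lra.
  unfold Rdiv; rewrite Rinv_1.
  pose proof (SIN_bound 1); pose proof (SIN_bound (U * 2)).
  assert (0 <= (sin (U * 2) + 1) * / (U * 2))
    by (apply Rmult_le_pos; [lra|left; apply Rinv_0_lt_compat; lra]).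
  lra.
Qed.

Section CosIntegralLowerBound.
Variables (k : R -> R) (alpha : R).
Hypothesis k_ge0 : forall x, 0 <= x -> 0 <= k x.
Hypothesis k_nonincreasing : forall x y, 0 <= x -> x <= y -> k y <= k x.
Hypothesis k_0 : k 0 = alpha.

Let k_le_alpha x : 0 <= x -> k x <= alpha.
Proof. intros; rewrite <- k_0; apply k_nonincreasing; lra. Qed.

Lemma cos_integrand_ge_near U x : 0 <= U -> 0 < x -> - (U * alpha) <= cos_integrand k U x.
Proof.
  intros HU Hx; unfold cos_integrand, Rdiv.
  assert (Hcos : - (U * x) <= cos (U * x) - 1).
  { pose proof (Rabs_cos_sub1_le (U * x)) as H.
    rewrite (Rabs_pos_eq (U * x)) in H by nra; apply Rabs_le_between in H; lra. }
  pose proof (k_ge0 x ltac:(lra)); pose proof (k_le_alpha x ltac:(lra)).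
  assert (Hk : - (U * x) * k x * / x <= (cos (U * x) - 1) * k x * / x).
  { apply Rmult_le_compat_r; [left; now apply Rinv_0_lt_compat|nra]. }
  replace (- (U * x) * k x * / x) with (- (U * k x)) in Hk by (field; lra).
  nra.
Qed.

Lemma cos_integrand_ge_mid U x : 0 < U -> 0 < x -> alpha * cos_minorant U x <= cos_integrand k U x.
Proof.
  intros HU Hx.
  pose proof (cos_minorant_le U x HU Hx).
  assert (Hk : alpha * ((cos (U * x) - 1) / x) <= cos_integrand k U x).
  { unfold cos_integrand, Rdiv.
    pose proof (k_le_alpha x ltac:(lra)); pose proof (COS_bound (U * x)).
    replace (alpha * ((cos (U * x) - 1) * / x)) with (alpha * (cos (U * x) - 1) * / x) by ring.
    apply Rmult_le_compat_r; [left; now apply Rinv_0_lt_compat|nra]. }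
  assert (0 <= alpha) by (rewrite <- k_0; apply k_ge0; lra).
  nra.
Qed.

Lemma cos_integrand_ge_far U x : 0 < x -> - 2 * (k x / x) <= cos_integrand k U x.
Proof.
  intros Hx; unfold cos_integrand, Rdiv.
  pose proof (k_ge0 x ltac:(lra)); pose proof (COS_bound (U * x)).
  replace (- 2 * (k x * / x)) with (- 2 * k x * / x) by ring.
  apply Rmult_le_compat_r; [left; now apply Rinv_0_lt_compat|nra].
Qed.

Lemma RInt_cos_integrand_near U a b : 0 <= U -> 0 <= a <= b ->
  - ((b - a) * (U * alpha)) <= RInt (cos_integrand k U) a b.
Proof.
  intros HU Hab.
  replace (- ((b - a) * (U * alpha))) with (RInt (fun _ => - (U * alpha)) a b)
    by (rewrite RInt_const; unfold scal; simpl; unfold mult; simpl; ring).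
  apply RInt_le; [lra|apply ex_RInt_const|apply ex_RInt_cos_integrand; auto; lra|].
  intros x Hx; apply cos_integrand_ge_near; lra.
Qed.

Lemma RInt_cos_integrand_mid U : 1 < U ->
  - (alpha * (2 + ln 2 + ln U)) <= RInt (cos_integrand k U) (/ U) 2.
Proof.
  intros HU.
  pose proof (Rinv_gt1 U HU) as HUinv.
  assert (Hmin : ex_RInt (cos_minorant U) (/ U) 2).
  { apply (@ex_RInt_continuous R_CompleteNormedModule); intros x Hx.
    rewrite Rmin_left, Rmax_right in Hx by lra.
    apply (@ex_derive_continuous R_AbsRing R_NormedModule); unfold cos_minorant; auto_derive.
    repeat split; apply Rgt_not_eq; repeat apply Rmult_lt_0_compat; lra. }
  assert (0 <= alpha) by (rewrite <- k_0; apply k_ge0; lra).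
  apply Rle_trans with (alpha * RInt (cos_minorant U) (/ U) 2).
  { pose proof (RInt_cos_minorant_ge U HU); nra. }
  replace (alpha * RInt (cos_minorant U) (/ U) 2)
    with (RInt (fun x => alpha * cos_minorant U x) (/ U) 2)
    by exact (RInt_scal (cos_minorant U) (/ U) 2 alpha Hmin).
  apply RInt_le; [lra|exact (ex_RInt_scal _ _ _ alpha Hmin)| |].
  { apply ex_RInt_cos_integrand; auto; lra. }
  intros x Hx; apply cos_integrand_ge_mid; lra.
Qed.

Lemma RInt_cos_integrand_0_2 U : 0 <= U ->
  - (alpha * (3 + ln 2 + ln (Rmax 1 U))) <= RInt (cos_integrand k U) 0 2.
Proof.
  intros HU.
  assert (0 <= alpha) by (rewrite <- k_0; apply k_ge0; lra).
  assert (0 <= alpha * ln 2) by (pose proof ln_lt_2; apply Rmult_le_pos; lra).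
  destruct (Rle_dec U 1) as [HU1|HU1].
  - rewrite Rmax_left, ln_1 by lra.
    pose proof (RInt_cos_integrand_near U 0 2 HU ltac:(lra)); nra.
  - rewrite Rmax_right by lra.
    pose proof (Rinv_gt1 U ltac:(lra)) as HUinv.
    rewrite <- (RInt_Chasles (cos_integrand k U) 0 (/ U) 2)
      by (apply ex_RInt_cos_integrand; auto; lra).
    pose proof (RInt_cos_integrand_near U 0 (/ U) HU ltac:(lra)) as Hnear.
    replace ((/ U - 0) * (U * alpha)) with alpha in Hnear by (field; lra).
    pose proof (RInt_cos_integrand_mid U ltac:(lra)).
    unfold plus; simpl; lra.
Qed.

Lemma RInt_cos_integrand_tail U A : 2 <= A -> ex_RInt (fun x => k x / x) 2 A ->
  - 2 * RInt (fun x => k x / x) 2 A <= RInt (cos_integrand k U) 2 A.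
Proof.
  intros HA Hint.
  replace (- 2 * RInt (fun x => k x / x) 2 A) with (RInt (fun x => - 2 * (k x / x)) 2 A)
    by exact (RInt_scal (fun x => k x / x) 2 A (-2) Hint).
  apply RInt_le; [lra|exact (ex_RInt_scal _ _ _ (-2) Hint)|apply ex_RInt_cos_integrand; auto; lra|].
  intros x Hx; apply cos_integrand_ge_far; lra.
Qed.

Lemma RInt_cos_integrand_ge U A : 0 <= U -> 2 <= A -> ex_RInt (fun x => k x / x) 2 A ->
  - (alpha * (3 + ln 2 + ln (Rmax 1 U))) - 2 * RInt (fun x => k x / x) 2 A
    <= RInt (cos_integrand k U) 0 A.
Proof.
  intros HU HA Hint.
  rewrite <- (RInt_Chasles (cos_integrand k U) 0 2 A)
    by (apply ex_RInt_cos_integrand; auto; lra).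
  pose proof (RInt_cos_integrand_0_2 U HU); pose proof (RInt_cos_integrand_tail U A HA Hint).
  unfold plus; simpl; lra.
Qed.

End CosIntegralLowerBound.

Lemma cos_integrand_Rabs k u : cos_integrand k (Rabs u) = cos_integrand k u.
Proof.
  apply functional_extensionality; intros x; unfold cos_integrand.
  destruct (Rle_dec 0 u).
  - now rewrite Rabs_pos_eq.
  - now rewrite Rabs_left, Ropp_mult_distr_l_reverse, cos_neg by lra.
Qed.

Lemma cmod_cexp a b : cmod (cexp a b) = exp a.
Proof.
  unfold cmod, cexp; cbn [fst snd].
  replace ((exp a * cos b) ^ 2 + (exp a * sin b) ^ 2)
    with (exp a ^ 2 * ((sin b)² + (cos b)²)) by (unfold Rsqr; ring).
  rewrite sin2_cos2, Rmult_1_r; apply sqrt_pow2; left; apply exp_pos.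
Qed.

Theorem lemmaL2 (k : R -> R) (alpha : R)
  (hk : tail_function k) (hlog : log_moment_finite k)
  (halpha : 2 < alpha) (hk0 : k 0 = alpha) :
  exists c h0, 0 < c /\ 0 < h0 /\
    forall h, 0 < h <= h0 ->
      forall u, Rabs u <= / h ->
        exists z, is_phi k u z /\ c * Rpower h alpha <= cmod z.
Proof.
  destruct hk as [k_ge0 [k_nonincreasing _]]; destruct hlog as [L HL].
  destruct (improper_int_from_RInt _ 2 L HL) as [Htail_int Htail_lim].
  destruct (Htail_lim 1 Rlt_0_1) as [M HM].
  set (C := alpha * (3 + ln 2) + 2 * (Rabs L + 1)).
  exists (exp (- C)), 1; split; [apply exp_pos|split; [lra|]].
  intros h [Hh Hh1] u Hu.
  destruct (ex_improper_cos_integrand k k_ge0 k_nonincreasing L HL u) as [I1 HI1].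
  destruct (ex_improper_sin_integrand k k_ge0 k_nonincreasing L HL u) as [I2 HI2].
  exists (cexp I1 I2); split; [now exists I1, I2|].
  assert (Hln : ln (Rmax 1 (Rabs u)) <= - ln h).
  { rewrite <- ln_Rinv by lra; apply ln_le; [apply Rlt_le_trans with 1; [lra|apply Rmax_l]|].
    apply Rmax_lub; [|exact Hu]; rewrite <- Rinv_1; apply Rinv_le_contravar; lra. }
  assert (HI1_ge : - C + alpha * ln h <= I1).
  { apply (improper_int_from_ge _ 0 _ _ HI1); exists (Rmax M 2); intros A HA.
    pose proof (Rmax_l M 2); pose proof (Rmax_r M 2).
    pose proof (Rabs_def2 _ _ (HM A ltac:(lra) ltac:(lra))).
    rewrite <- cos_integrand_Rabs.
    eapply Rle_trans;
      [|apply RInt_cos_integrand_ge; auto; [apply Rabs_pos|lra|apply Htail_int; lra]].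
    pose proof (Rle_abs L); unfold C; nra. }
  rewrite cmod_cexp; unfold Rpower; rewrite <- exp_plus.
  destruct (Rle_lt_or_eq_dec _ _ HI1_ge) as [Hlt| <-]; [left; now apply exp_increasing|lra].
Qed.
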